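(* There exists a sequence $c=\{c_k\}_{k\in\mathbb Z}$ of real numbers such that, letting $c^-$ be the two-sided sequence with $c^-_k=c_k$ for $k\le0$ and $c^-_k=0$ for $k>0$, and $c^+$ the two-sided sequence with $c^+_k=c_k$ for $k\ge1$ and $c^+_k=0$ for $k\le0$, we have $c^-\notin\overline{\mathrm{GM}}$, $c^+\in\overline{\mathrm{GM}}$, and $c\in\overline{\mathrm{GM}}$.
   Context: For a two-sided sequence $c$: $|\Delta c_k|=|c_k-c_{k+1}|$ for $k>0$, $|\Delta c_k|=|c_k-c_{k-1}|$ for $k<0$, $|\Delta c_0|=|c_0-c_1|+|c_0-c_{-1}|$; for $k\ge0$, $\widehat c_{2^k}=\sup_{2^k\le|m|<2^{k+1}}\frac1{|m|+1}|\sum_{j=0}^mc_j|$, where for $m<0$, $\sum_{j=0}^mc_j$ means $\sum_{j=m}^0c_j$; $[\cdot]$ is the floor function. The sequence $c$ belongs to $\overline{\mathrm{GM}}$ if there is $C>0$ such that for every $n\ge0$, $\sum_{[2^{n-1}]\le|m|<2^n}|\Delta c_m|\le C\sup_{k\in\mathbb N_0}\min(1,2^{k-n})\widehat c_{2^k}$. *)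

From HB Require Import structures.
From mathcomp Require Import all_boot all_order all_algebra.
From mathcomp Require Import all_classical all_reals all_analysis.
From mathcomp Require Import Rstruct.
Set Implicit Arguments. Unset Strict Implicit. Unset Printing Implicit Defensive.
Import Order.TTheory GRing.Theory Num.Theory.
Local Open Scope ring_scope.

Notation Rr := Rdefinitions.R.

Definition dabs (c : int -> Rr) (k : int) : Rr :=
  if (0 < k)%R then `|c k - c (k + 1)|
  else if (k < 0)%R then `|c k - c (k - 1)|
  else `|c 0 - c 1| + `|c 0 - c (-1)|.

Definition psum (c : int -> Rr) (m : int) : Rr :=
  if (0 <= m)%R then \sum_(0 <= j < `|m|%N.+1) c (j%:Z)
  else \sum_(0 <= j < `|m|%N.+1) c (- (j%:Z)).

(* hat c_{2^k} = sup_{2^k <= |m| < 2^(k+1)} |sum_{j=0}^m c_j| / (|m|+1);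
   m ranges over the integers i - 2^(k+1), 0 <= i <= 2^(k+2), filtered;
   the index set is finite and nonempty and the terms are >= 0,
   so the sup is the max (with 0 as neutral element). *)
Definition hatc (c : int -> Rr) (k : nat) : Rr :=
  \big[Num.max/0]_(i < (2 * 2 ^ k.+1).+1 |
      ((2 ^ k <= `|i%:Z - (2 ^ k.+1)%:Z|%N) && (`|i%:Z - (2 ^ k.+1)%:Z|%N < 2 ^ k.+1))%N)
    (`|psum c (i%:Z - (2 ^ k.+1)%:Z)| / ((`|i%:Z - (2 ^ k.+1)%:Z|%N)%:R + 1)).

(* sum_{[2^(n-1)] <= |m| < 2^n} |Delta c_m|, m = i - 2^n with 0 <= i <= 2^(n+1);
   [2^(n-1)] = 2^n %/ 2 (floor; equals 0 for n = 0). *)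
Definition dyadic_var (c : int -> Rr) (n : nat) : Rr :=
  \sum_(i < (2 * 2 ^ n).+1 |
      ((2 ^ n %/ 2 <= `|i%:Z - (2 ^ n)%:Z|%N) && (`|i%:Z - (2 ^ n)%:Z|%N < 2 ^ n))%N)
    dabs c (i%:Z - (2 ^ n)%:Z).

Definition gm_sup (c : int -> Rr) (n : nat) : \bar Rr :=
  ereal_sup [set ((Num.min 1 ((2%:R : Rr) ^ (k%:Z - n%:Z))) * hatc c k)%:E
            | k in [set: nat]].

Definition GMbar (c : int -> Rr) : Prop :=
  exists C : Rr, 0 < C /\
    forall n : nat, ((dyadic_var c n)%:E <= C%:E * gm_sup c n)%E.

Definition cminus (c : int -> Rr) : int -> Rr := fun k => if (k <= 0)%R then c k else 0.
Definition cplus (c : int -> Rr) : int -> Rr := fun k => if (1 <= k)%R then c k else 0.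

From mathcomp Require Import all_boot all_order all_algebra.
From mathcomp Require Import all_classical all_reals all_analysis.
From mathcomp Require Import Rstruct.
From mathcomp Require Import ring lra zify.
Import Order.TTheory GRing.Theory Num.Theory.
Local Open Scope ring_scope.

(* Take c_k = (-1)^k for k <= 0 and c_k = k for k >= 1.  The partial sums of c^-
   are bounded, so hat c_{2^k} = O(2^-k) and the right-hand side of the GM
   condition at level n is O(2^-n); yet every dyadic block of c^- contains a jump
   of size 2, so c^- is not in GM.  For c^+ and c the increments are bounded, so
   the left-hand side at level n is O(2^n), while the partial sum up to 2^n is at
   least 2^n (2^n + 1) / 2, which gives hat c_{2^n} >= 2^n / 2. *)

Lemma expr2n_gt0 n : 0 < (2 : Rr) ^+ n.
Proof. by rewrite exprn_gt0. Qed.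

Section DyadicQuantities.
Variable f : int -> Rr.

Lemma dabs_ge0 m : 0 <= dabs f m.
Proof. by rewrite /dabs; case: ifP => _; [|case: ifP => _]; rewrite ?addr_ge0. Qed.

Lemma dabs_le (L : Rr) : (forall k, `|f k - f (k + 1)| <= L) -> forall m, dabs f m <= 2 * L.
Proof.
move=> hL m; have L_ge0 : 0 <= L by apply: le_trans (hL 0).
have hL_pred k : `|f k - f (k - 1)| <= L by have := hL (k - 1); rewrite subrK distrC.
rewrite /dabs; case: ifP => _; [|case: ifP => _].
- by have := hL m; lra.
- by have := hL_pred m; lra.
- by have := hL 0; have := hL_pred 0; rewrite sub0r add0r; lra.
Qed.

Lemma dabs_le_dyadic_var n m :
  (2 ^ n %/ 2 <= `|m|%N < 2 ^ n)%N -> dabs f m <= dyadic_var f n.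
Proof.
move=> /andP[m_ge m_lt].
have i_lt : (`|(m + (2 ^ n)%:Z)%R|%N < (2 * 2 ^ n).+1)%N by lia.
have ei : (Ordinal i_lt)%:Z - (2 ^ n)%:Z = m by rewrite /=; lia.
rewrite /dyadic_var (bigD1 (Ordinal i_lt)) /= ei ?m_ge ?m_lt //.
by rewrite lerDl sumr_ge0 // => i _; exact: dabs_ge0.
Qed.

Lemma psum_le_hatc k m :
  (2 ^ k <= `|m|%N < 2 ^ k.+1)%N -> `|psum f m| / (`|m|%N%:R + 1) <= hatc f k.
Proof.
move=> /andP[m_ge m_lt].
have i_lt : (`|(m + (2 ^ k.+1)%:Z)%R|%N < (2 * 2 ^ k.+1).+1)%N by lia.
have ei : (Ordinal i_lt)%:Z - (2 ^ k.+1)%:Z = m by rewrite /=; lia.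
pose F (i : 'I_(2 * 2 ^ k.+1).+1) := `|psum f (i%:Z - (2 ^ k.+1)%:Z)| /
  ((`|i%:Z - (2 ^ k.+1)%:Z|%N)%:R + 1).
have hP : (2 ^ k <= `|(Ordinal i_lt)%:Z - (2 ^ k.+1)%:Z|%N < 2 ^ k.+1)%N.
  by rewrite ei m_ge.
by apply: le_trans (le_bigmax_cond 0 F hP); rewrite /F ei.
Qed.

Lemma hatc_le_geometric (M : Rr) :
  (forall m, `|psum f m| <= M) -> forall k, hatc f k <= M / 2 ^+ k.
Proof.
move=> hM k; have M_ge0 : 0 <= M by apply: le_trans (hM 0).
apply: bigmax_le => [|i /andP[i_ge i_lt]]; first by rewrite divr_ge0 // ltW ?expr2n_gt0.
set m := `|_|%N in i_ge i_lt *.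
have m1_gt0 : 0 < m%:R + 1 :> Rr by rewrite ltr_wpDl // ler0n.
apply: le_trans (_ : M / (m%:R + 1) <= _).
  by rewrite ler_wpM2r // invr_ge0 ltW.
rewrite ler_wpM2l // lef_pV2 ?posrE ?expr2n_gt0 //.
by rewrite -natrX natr1 ler_nat; lia.
Qed.

Lemma hatc_ge0 k : 0 <= hatc f k.
Proof. exact: bigmax_ge_id. Qed.

Lemma hatc_le_gm_sup n : ((hatc f n)%:E <= gm_sup f n)%E.
Proof.
apply: ereal_sup_ubound; exists n => //.
by rewrite subrr expr0z minxx mul1r.
Qed.

Lemma gm_sup_le_geometric (M : Rr) : (forall k, hatc f k <= M / 2 ^+ k) ->
  forall n, (gm_sup f n <= (M / 2 ^+ n)%:E)%E.
Proof.
move=> hM n; apply: ge_ereal_sup => _ [k _ <-]; rewrite lee_fin.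
have M_ge0 : 0 <= M.
  by have := hM 0; rewrite expr0 divr1; apply: le_trans; exact: hatc_ge0.
have pow_gt0 : 0 < (2 : Rr) ^ (k%:Z - n%:Z) by rewrite exprz_gt0.
have -> : M / 2 ^+ n = 2 ^ (k%:Z - n%:Z) * (M / 2 ^+ k).
  have -> : (2 : Rr) ^+ k = 2 ^ (k%:Z - n%:Z) * 2 ^+ n.
    by rewrite -[2 ^+ n]/(2 ^ n%:Z) -expfzDr ?pnatr_eq0 // subrK.
  by field; rewrite !lt0r_neq0 ?expr2n_gt0.
apply: le_trans (_ : Num.min 1 (2 ^ (k%:Z - n%:Z)) * (M / 2 ^+ k) <= _).
  by rewrite ler_wpM2l // le_min ler01 ltW.
by rewrite ler_wpM2r ?ge_min ?lexx ?orbT // divr_ge0 // ltW ?expr2n_gt0.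
Qed.

Lemma dyadic_var_le (B : Rr) :
  (forall m, dabs f m <= B) -> forall n, dyadic_var f n <= 3 * 2 ^+ n * B.
Proof.
move=> hB n; have B_ge0 : 0 <= B by apply: le_trans (hB 0); exact: dabs_ge0.
rewrite /dyadic_var big_mkcond /=.
apply: le_trans (_ : \sum_(i < (2 * 2 ^ n).+1) B <= _).
  by apply: ler_sum => i _; case: ifP => _.
rewrite sumr_const card_ord -[B *+ _]mulr_natl; apply: ler_wpM2r => //.
rewrite -natrX -natrM ler_nat.
by have := expn_gt0 2 n; lia.
Qed.

Lemma psum_ge_triangular : (forall j : nat, j%:R <= f j%:Z) ->
  forall N : nat, (N * N.+1)%:R / 2 <= psum f N.
Proof.
move=> hf N; rewrite /psum le0z_nat absz_nat.
elim: N => [|N IH]; first by rewrite big_nat1 mul0r; have := hf 0%N.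
rewrite big_nat_recr //= (_ : N.+1 * N.+2 = N * N.+1 + 2 * N.+1)%N; last by lia.
by rewrite natrD natrM; have := hf N.+1; lra.
Qed.

Lemma hatc_ge_geometric : (forall j : nat, j%:R <= f j%:Z) ->
  forall n, 2 ^+ n / 2 <= hatc f n.
Proof.
move=> hf n; set x := (2 ^ n)%N.
have hx : (2 ^ n <= `|x%:Z|%N < 2 ^ n.+1)%N by rewrite absz_nat /x expnS; lia.
apply: le_trans _ (psum_le_hatc _ _ hx); rewrite absz_nat.
have x1_gt0 : 0 < x%:R + 1 :> Rr by rewrite ltr_wpDl // ler0n.
rewrite ler_pdivlMr // -natrX -/x; apply: le_trans (ler_norm _).
by have := psum_ge_triangular hf x; rewrite natrM -natr1; lra.
Qed.

Lemma GMbar_of_bounded_steps_linear_growth (L : Rr) : 0 < L ->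
  (forall k, `|f k - f (k + 1)| <= L) -> (forall j : nat, j%:R <= f j%:Z) -> GMbar f.
Proof.
move=> L_gt0 hL hf; exists (12 * L); split; first by rewrite mulr_gt0.
move=> n; apply: (@le_trans _ _ ((12 * L)%:E * (hatc f n)%:E)%E); last first.
  by apply: lee_wpmul2l; [rewrite lee_fin mulr_ge0 // ltW | exact: hatc_le_gm_sup].
rewrite -EFinM lee_fin; apply: le_trans (dyadic_var_le _ (dabs_le _ hL) n) _.
have -> : 3 * 2 ^+ n * (2 * L) = 12 * L * (2 ^+ n / 2) by field.
apply: ler_wpM2l; first by rewrite mulr_ge0 // ltW.
exact: hatc_ge_geometric.
Qed.

Lemma not_GMbar_of_bounded_psum (d M : Rr) : 0 < d ->
  (forall n, (0 < n)%N -> d <= dyadic_var f n) -> (forall m, `|psum f m| <= M) -> ~ GMbar f.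
Proof.
move=> d_gt0 hd hM [C [C_gt0 hC]].
have M_ge0 : 0 <= M by apply: le_trans (hM 0).
have decay n : (0 < n)%N -> d * 2 ^+ n <= C * M.
  move=> n_gt0; rewrite -ler_pdivlMr ?expr2n_gt0 // -mulrA -lee_fin EFinM.
  apply: (@le_trans _ _ (C%:E * gm_sup f n)%E).
    by apply: le_trans _ (hC n); rewrite lee_fin hd.
  apply: lee_wpmul2l; first by rewrite lee_fin ltW.
  exact: gm_sup_le_geometric (hatc_le_geometric _ hM) n.
have CMd_ge0 : 0 <= d^-1 * (C * M) by rewrite !mulr_ge0 ?invr_ge0 // ltW.
pose a := Num.Def.archi_bound (d^-1 * (C * M)).
have := archi_boundP CMd_ge0; rewrite ltr_pdivrMl // -/a => hCM.
have : d * a%:R < d * 2 ^+ a.+1.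
  by rewrite ltr_pM2l // -natrX ltr_nat (ltn_trans (ltnSn a)) // ltn_expl.
by move=> /(lt_trans hCM)/lt_le_trans/(_ (decay a.+1 isT)); rewrite ltxx.
Qed.

End DyadicQuantities.

Definition example_seq (k : int) : Rr := if k <= 0 then (-1) ^+ `|k|%N else k%:~R.

Lemma example_seq_pos (a : nat) : example_seq a.+1 = a.+1%:R.
Proof. by []. Qed.

Lemma example_seq_nonpos k : k <= 0 -> example_seq k = (-1) ^+ `|k|%N.
Proof. by rewrite /example_seq => ->. Qed.

Lemma sum_signr N : \sum_(0 <= j < N.+1) (-1 : Rr) ^+ j = (~~ odd N)%:R.
Proof.
elim: N => [|N IH]; first by rewrite big_nat1 expr0.
rewrite big_nat_recr //= IH -signr_odd /=.
by case: (odd N) => /=; rewrite ?expr1 ?expr0; lra.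
Qed.

Lemma psum_cminus_example m : `|psum (cminus example_seq) m| <= 1.
Proof.
rewrite /psum; case: ifP => _.
  rewrite big_nat_recl // big1 ?addr0 => [|j _]; last by rewrite /cminus.
  by rewrite /cminus /= example_seq_nonpos // expr0 normr1.
rewrite (eq_bigr (fun j => (-1 : Rr) ^+ j)) => [|j _]; last first.
  by rewrite /cminus oppr_le0 example_seq_nonpos ?oppr_le0 // abszN absz_nat.
by rewrite sum_signr; case: (odd _); rewrite ?normr1 ?normr0.
Qed.

Lemma norm_signr_step (a : nat) : `|(-1 : Rr) ^+ a.+1 - (-1) ^+ a| = 2.
Proof. by rewrite exprS mulN1r -opprD normrN -mulr2n normrMn normrX normrN1 expr1n. Qed.

Lemma dabs_cminus_example_neg (a : nat) : dabs (cminus example_seq) (Negz a) = 2.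
Proof.
rewrite /dabs /= (_ : Negz a - 1 = Negz a.+1); last by rewrite !NegzE; lia.
by rewrite /cminus /= -(norm_signr_step a.+1) distrC.
Qed.

Lemma dyadic_var_cminus_example n : (0 < n)%N -> 2 <= dyadic_var (cminus example_seq) n.
Proof.
move=> n_gt0; have pow_ge2 : (2 <= 2 ^ n)%N by rewrite -{1}(expn1 2) leq_exp2l.
rewrite -(dabs_cminus_example_neg (2 ^ n - 2)); apply: dabs_le_dyadic_var.
by rewrite /absz; lia.
Qed.

Lemma example_seq_step k : `|example_seq k - example_seq (k + 1)| <= 2.
Proof.
case: k => [[|a]|a].
- by rewrite subrr normr0 ler0n.
- by rewrite -PoszD addn1 !example_seq_pos distrC -natrB // subSnn normr1 ler1n.
- rewrite example_seq_nonpos // example_seq_nonpos; last by rewrite NegzE; lia.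
  rewrite (_ : Negz a + 1 = - a%:Z); last by rewrite NegzE; lia.
  by rewrite abszN absz_nat norm_signr_step.
Qed.

Lemma cplus_example_step k : `|cplus example_seq k - cplus example_seq (k + 1)| <= 1.
Proof.
rewrite /cplus; case: k => [[|a]|a] /=.
- by rewrite sub0r normrN normr1.
- by rewrite -PoszD addn1 !example_seq_pos distrC -natrB // subSnn normr1.
- rewrite (_ : (1 <= Negz a + 1) = false); last by rewrite NegzE; lia.
  by rewrite subrr normr0.
Qed.

Lemma example_seq_ge_nat (j : nat) : j%:R <= example_seq j.
Proof. by case: j => [|j]; rewrite ?example_seq_pos //= expr0 ler01. Qed.

Lemma cplus_example_ge_nat (j : nat) : j%:R <= cplus example_seq j.
Proof. by case: j => [|j]; rewrite /cplus //= lexx. Qed.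

Theorem mainTheorem16 :
  exists c : int -> Rdefinitions.R,
    ~ GMbar (cminus c) /\ GMbar (cplus c) /\ GMbar c.
Proof.
exists example_seq; split; [|split].
- exact: (not_GMbar_of_bounded_psum _ _ _ (ltr0Sn _ 1) dyadic_var_cminus_example
    psum_cminus_example).
- exact: (GMbar_of_bounded_steps_linear_growth _ _ ltr01 cplus_example_step
    cplus_example_ge_nat).
- exact: (GMbar_of_bounded_steps_linear_growth _ _ (ltr0Sn _ 1) example_seq_step
    example_seq_ge_nat).
Qed.
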